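(* Inserting $n$ values, one at a time, into an initially empty black-white array (BWA) takes $O(\log n)$ average (amortized) time per insertion.
   Context: A black-white array (BWA) of size $N=2^K$ stores values from a totally ordered set. It has a white array $W[1..N-1]$ and a black array $B[1..N/2-1]$. For $i\ge0$, the segment of rank $i$ of either array is the index block $[2^i,2^{i+1}-1]$. A state variable $\mathtt{total}$ counts stored values and is initially $0$. The rank-$i$ segment is active iff bit $i$ of $\mathtt{total}$ is $1$. Insert$(v)$: if rank 0 is inactive, set $W[1]=v$; otherwise set $B[1]=v$ and perform $\mathrm{merge}(0)$. $\mathrm{merge}(i)$: merge the sorted white and black segments of rank $i$ using a standard two-way merge, at cost proportional to the segment length. The result goes into the white rank-$(i+1)$ segment if that segment is inactive. Otherwise it goes into the black rank-$(i+1)$ segment, followed by $\mathrm{merge}(i+1)$. When an insertion completes, $\mathtt{total}$ has increased by one. *)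

From mathcomp Require Import all_boot all_order.
Set Implicit Arguments. Unset Strict Implicit. Unset Printing Implicit Defensive.

(* Black-white array (BWA).  Segments of rank i of the white array W and the
   black array B (index blocks [2^i, 2^(i+1)-1]) are represented as sequences
   of length 2^i: [W i] and [B i]. *)
Record bwa (T : Type) := BWA {
  total : nat;
  wseg : nat -> seq T;
  bseg : nat -> seq T
}.

Definition empty_bwa (T : Type) : bwa T := BWA 0 (fun _ => [::]) (fun _ => [::]).

Definition bit (n i : nat) : bool := odd (n %/ 2 ^ i).

Definition active T (s : bwa T) (i : nat) : bool := bit (total s) i.

Definition upd T (f : nat -> seq T) (i : nat) (x : seq T) : nat -> seq T :=
  fun j => if j == i then x else f j.

(* Merging the two sorted rank-i segments with the
   standard two-way merge ([path.merge]) costs the segment length 2^i.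
   [fuel] bounds the recursion depth (the cascade stops at the first inactive
   rank, so fuel = total+1 always suffices). *)
Fixpoint merge_cascade T (le : rel T) (fuel : nat) (i : nat) (s : bwa T)
  : bwa T * nat :=
  let m := merge le (wseg s i) (bseg s i) in
  let c := 2 ^ i in
  if ~~ active s i.+1 then (BWA (total s) (upd (wseg s) i.+1 m) (bseg s), c)
  else
    let s' := BWA (total s) (wseg s) (upd (bseg s) i.+1 m) in
    match fuel with
    | 0 => (s', c)
    | f.+1 => let (s'', c') := merge_cascade le f i.+1 s' in (s'', c + c')
    end.

Definition bwa_insert T (le : rel T) (v : T) (s : bwa T) : bwa T * nat :=
  if ~~ active s 0 then
    (BWA (total s).+1 (upd (wseg s) 0 [:: v]) (bseg s), 1)
  else
    let s1 := BWA (total s) (wseg s) (upd (bseg s) 0 [:: v]) in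
    let (s2, c) := merge_cascade le (total s).+1 0 s1 in
    (BWA (total s2).+1 (wseg s2) (bseg s2), 1 + c).

Fixpoint insert_all T (le : rel T) (vs : seq T) (s : bwa T) : bwa T * nat :=
  match vs with
  | [::] => (s, 0)
  | v :: vs' =>
      let (s1, c1) := bwa_insert le v s in
      let (s2, c2) := insert_all le vs' s1 in (s2, c1 + c2)
  end.

Definition insertion_cost T (le : rel T) (vs : seq T) : nat :=
  (insert_all le vs (empty_bwa T)).2.

From Pilot Require Import Defs.
From mathcomp Require Import all_boot all_order.
From mathcomp Require Import zify.

Set Implicit Arguments.
Unset Strict Implicit.
Unset Printing Implicit Defensive.

(* An insertion into a BWA holding u values runs the merges of ranks
   0, ..., t-1, where t is the number of trailing ones of u; with the unit cost
   of storing the value this costs 1 + 1 + 2 + ... + 2^(t-1) = 2^t, which is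
   the 2-part (u+1)`_2 of u+1.  Among 1, ..., 2m the odd numbers have 2-part 1
   and the even ones 2k have 2-part 2 * k`_2, so S(2m) = m + 2 S(m) for the
   partial sums S(n) = \sum_(k <= n) k`_2, whence S(n) <= n (log2 n + 1). *)

Lemma part2_succ_even u : ~~ odd u -> u.+1`_2 = 1.
Proof. by move=> u_even; rewrite p_part lognE dvdn2 /= u_even. Qed.

Lemma part2_succ_odd u : odd u -> u.+1`_2 = (u./2.+1`_2).*2.
Proof.
move=> u_odd; have -> : u.+1 = 2 * u./2.+1.
  by rewrite -{1}(odd_double_half u) u_odd mul2n doubleS.
have logn22 : logn 2 2 = 1 := pfactorK 1 (isT : prime 2).
by rewrite partnM // -mul2n p_part logn22.
Qed.

Lemma sum_part2_succ_double m :
  \sum_(0 <= u < m.*2) u.+1`_2 = m + (\sum_(0 <= u < m) u.+1`_2).*2.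
Proof.
elim: m => [|m IH]; first by rewrite big_geq.
rewrite doubleS !big_nat_recr //= IH part2_succ_even ?odd_double //.
rewrite part2_succ_odd /= ?odd_double // uphalf_double; lia.
Qed.

Lemma sum_part2_succ_le n : \sum_(0 <= u < n) u.+1`_2 <= n * (trunc_log 2 n).+1.
Proof.
elim/ltn_ind: n => n IH.
have [n_gt1 | n_le1] := ltnP 1 n; last first.
  by case: n n_le1 {IH} => [|[|]] // _; rewrite ?big_nat1 ?big_geq ?partn1.
have n_split := odd_double_half n.
have sum_split :
    \sum_(0 <= u < n) u.+1`_2 = odd n + n./2 + (\sum_(0 <= u < n./2) u.+1`_2).*2.
  rewrite -{1}n_split; case: (odd n) => /=; last by rewrite sum_part2_succ_double.
  by rewrite big_nat_recr //= sum_part2_succ_double part2_succ_even ?odd_double //; lia.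
have half_lt : n./2 < n by rewrite -divn2 ltn_Pdiv // ltnW.
rewrite sum_split (trunc_log2S n_gt1); have := IH _ half_lt.
move: n_split; set m := n./2; set L := trunc_log 2 m; set S := \sum_(0 <= u < m) _.
by case: (odd n) => /= <-; nia.
Qed.

Section Insertion.

Variables (T : Type) (le : rel T).

Lemma merge_cascade_total f i s : Defs.total (merge_cascade le f i s).1 = Defs.total s.
Proof.
elim: f i s => [|f IH] i s /=; case: ifP => //= _.
set s' := BWA _ _ _; have := IH i.+1 s'.
by case: (merge_cascade le f i.+1 s').
Qed.

(* Writing q := total s %/ 2 ^ i.+1, the factor q.+1`_2 is 2 ^ t where t is
   the number of consecutive active ranks above i. *)
Lemma merge_cascade_cost f i s :
  (merge_cascade le f i s).2 + 2 ^ i <= 2 ^ i.+1 * (Defs.total s %/ 2 ^ i.+1).+1`_2.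
Proof.
elim: f i s => [|f IH] i s /=;
  have stop_bound : 2 ^ i + 2 ^ i <= 2 ^ i.+1 * (Defs.total s %/ 2 ^ i.+1).+1`_2
    by rewrite addnn -mul2n -expnS leq_pmulr ?part_gt0.
- by case: ifP.
- rewrite /active /bit; case: ifP => //= next_odd.
  set s' := BWA _ _ _; have := IH i.+1 s'.
  case: (merge_cascade le f i.+1 s') => s'' c /=.
  rewrite (part2_succ_odd (negbFE next_odd)) -divn2 -divnMA -expnSr.
  by rewrite addnAC addnn -!mul2n -expnS mulnA -expnSr addnC.
Qed.

Lemma bwa_insert_total v s : Defs.total (bwa_insert le v s).1 = (Defs.total s).+1.
Proof.
rewrite /bwa_insert; case: ifP => // _.
set s1 := BWA _ _ _; have := merge_cascade_total (Defs.total s).+1 0 s1.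
by case: (merge_cascade le _ 0 s1) => s2 c /= ->.
Qed.

Lemma bwa_insert_cost v s : (bwa_insert le v s).2 <= (Defs.total s).+1`_2.
Proof.
rewrite /bwa_insert /active /bit expn0 divn1.
have [total_odd | total_even] := boolP (odd (Defs.total s)); last first.
  by rewrite part2_succ_even.
set s1 := BWA (Defs.total s) _ _; have := merge_cascade_cost (Defs.total s).+1 0 s1.
case: (merge_cascade le _ 0 s1) => s2 c /=.
by rewrite (part2_succ_odd total_odd) expn0 expn1 divn2 mul2n addnC.
Qed.

Lemma insert_all_cost vs s :
  (insert_all le vs s).2 <= \sum_(Defs.total s <= u < Defs.total s + size vs) u.+1`_2.
Proof.
elim: vs s => [|v vs IH] s //=.
have := bwa_insert_cost v s; have := bwa_insert_total v s.
case: (bwa_insert le v s) => s1 c1 /= total_s1 cost_v.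
have := IH s1; case: (insert_all le vs s1) => s2 c2 /=.
rewrite total_s1 -addSnnS => cost_vs.
rewrite big_ltn; first exact: leq_add.
by rewrite addSn ltnS leq_addr.
Qed.

End Insertion.

Theorem mainTheorem7 :
  exists (C n0 : nat), forall (K : nat) (d : Order.disp_t) (T : orderType d)
    (vs : seq T),
    n0 <= size vs -> size vs <= 2 ^ K - 1 ->
    insertion_cost (<=%O : rel T) vs <= C * size vs * trunc_log 2 (size vs).
Proof.
exists 2, 2 => K d T vs n_ge2 _.
have log_gt0 : 0 < trunc_log 2 (size vs) by rewrite trunc_log_gt0.
apply: leq_trans (insert_all_cost _ vs (empty_bwa T)) _.
rewrite add0n; apply: leq_trans (sum_part2_succ_le _) _.
by rewrite mulnAC [X in X <= _]mulnC leq_mul2r mul2n -addnn -addn1 leq_add2l log_gt0 orbT.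
Qed.
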